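(* There exists $C_1>0$ such that for every $n\ge1$, every choice of integers $b_1,\dots,b_n\ge2$ and signs $\varepsilon_1,\dots,\varepsilon_n\in\{\pm1\}$, with $x=[\langle b_j:\varepsilon_j\rangle_{j=1}^n]$, and all $z,w\in\mathcal{F}_n(x)$, \[\frac1{C_1}\le\left|\frac{(G^{\circ n})'(z)}{(G^{\circ n})'(w)}\right|\le C_1.\]
   Context: For $x\in\mathbb{R}$, $[x]$ denotes the closest integer to $x$ with the convention $x\in([x]-1/2,[x]+1/2]$ for $x>0$, $x\in[[x]-1/2,[x]+1/2)$ for $x<0$, and $[0]=0$. $G(z)=-1/z-[\operatorname{Re}(-1/z)]$ for $z\ne0$. $[\langle b_j:\varepsilon_j\rangle_{j=1}^n]=\cfrac{\varepsilon_1}{b_1+\cfrac{\varepsilon_2}{\ddots+\cfrac{\varepsilon_n}{b_n}}}$. For an integer $b\ge2$ and $s\in\{\pm1\}$, $D(s/b)=\{-1/w:w\in B(-sb,1/2)\}$, on which $G$ is a holomorphic bijection onto $B(0,1/2)$. For $x=[\langle b_j:\varepsilon_j\rangle_{j=1}^n]$, let $s_k$ be the sign of $G^{\circ(k-1)}(x)$, and $\mathcal{F}_n(x)$ the set of $z$ with $G^{\circ k}(z)$ defined and in $D(s_{k+1}/b_{k+1})$ for all $0\le k\le n-1$; $\mathcal{F}_n$ is the collection of these round disks, on each of which $G^{\circ n}$ is a M\''obius bijection into $B(0,1/2)$. *)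

From Stdlib Require Import Reals ZArith Lra.
From Coquelicot Require Import Coquelicot.
Open Scope R_scope.

(* Closest integer [x] with the paper's tie-breaking convention:
   x > 0 : x in ([x]-1/2, [x]+1/2]  i.e. [x] = ceil(x - 1/2)
   x <= 0: x in [[x]-1/2, [x]+1/2)  i.e. [x] = floor(x + 1/2)  (gives [0] = 0). *)
Definition nint (x : R) : Z :=
  if Rlt_dec 0 x then (- Int_part (- (x - /2)))%Z else Int_part (x + /2).

(* G(z) = -1/z - [Re(-1/z)]  (only meaningful for z <> 0). *)
Definition G (z : C) : C :=
  Cminus (Copp (Cinv z)) (RtoC (IZR (nint (Re (Copp (Cinv z)))))).

Definition Giter (k : nat) : C -> C := Nat.iter k G.

(* [<b_j : e_j>_{j=k}^{k+m-1}] = e_k/(b_k + e_{k+1}/(... + e_{k+m-1}/b_{k+m-1})) *)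
Fixpoint cfrac (b e : nat -> Z) (k m : nat) : R :=
  match m with
  | O => 0
  | S m' => IZR (e k) / (IZR (b k) + cfrac b e (S k) m')
  end.

Definition rsign (t : R) : R :=
  if Rlt_dec 0 t then 1 else if Rlt_dec t 0 then -1 else 0.

(* D(s/b) = { -1/w : w in B(-s b, 1/2) } *)
Definition inD (s : R) (b : Z) (u : C) : Prop :=
  exists w : C, Cmod (Cplus w (RtoC (s * IZR b))) < /2 /\ u = Copp (Cinv w).

Definition sgnk (x : R) (k : nat) : R := rsign (Re (Giter (k - 1) (RtoC x))).

(* z in F_n(x): for 0 <= k <= n-1, G^k(z) is defined (all previous iterates
   are nonzero) and G^k(z) lies in D(s_{k+1}/b_{k+1}). *)
Definition inF (n : nat) (b : nat -> Z) (x : R) (z : C) : Prop :=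
  (forall k : nat, (k < n)%nat -> Giter k z <> RtoC 0) /\
  (forall k : nat, (k < n)%nat -> inD (sgnk x (S k)) (b (S k)) (Giter k z)).

(* On F_n(x) each step of G is a single Möbius branch u |-> -1/u - c_k with
   c_k = -s_{k+1} b_{k+1}; the sign s_{k+1} cannot vanish, since D(0/b) misses
   the disc B(0, 1/2) into which G maps.  Inverting the branches writes
   z = N(u)/D(u) with u = G^n(z) and N, D affine of determinant +-1, so that
   (G^n)'(z) = D(u)^2.  Because |c_k| >= 2, |N| < |D| on the unit disc, hence
   D(t) = A t + B has no zero there and |A| <= |B|.  As |u| < 1/2, |D(u)| lies
   between |B|/2 and 3|B|/2, and C_1 = 9 works. *)

From Stdlib Require Import Reals ZArith Lra Lia.
From Coquelicot Require Import Coquelicot.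
Open Scope R_scope.

(* Derivatives of maps C -> C viewing C as a normed module over itself; this is
   the form [is_derive_comp] needs for the inner map, whereas a bare
   [is_derive] on C elaborates to the distinct instance [C_NormedModule]. *)
Local Notation is_derive_CC := (@is_derive C_AbsRing (AbsRing_NormedModule C_AbsRing)).

Lemma Cinv_0 : Cinv (RtoC 0) = RtoC 0.
Proof. unfold Cinv, RtoC; simpl. f_equal; unfold Rdiv; ring. Qed.

Lemma is_derive_Cinv (u : C) : u <> 0 -> is_derive_CC Cinv u (- / (u * u))%C.
Proof.
  intro Hu. split; [apply is_linear_scal_l|].
  intros x Hx.
  apply (is_filter_lim_locally_unique (V := AbsRing_NormedModule C_AbsRing)) in Hx. subst x.
  intro eps. apply (locally_le_locally_norm (V := AbsRing_NormedModule C_AbsRing)).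
  assert (Hu0 : 0 < Cmod u) by now apply Cmod_gt_0.
  pose proof (cond_pos eps) as Heps.
  set (d := Rmin (Cmod u / 2) (eps * (Cmod u * Cmod u * Cmod u) / 2)).
  assert (Hd : 0 < d) by (apply Rmin_pos; [lra|]; apply Rmult_lt_0_compat; [|lra];
    repeat apply Rmult_lt_0_compat; lra).
  exists (mkposreal _ Hd). intros y Hy. change C in y. change (Cmod (y - u)%C < d) in Hy.
  pose proof (Rmin_l (Cmod u / 2) (eps * (Cmod u * Cmod u * Cmod u) / 2)) as Hd1.
  pose proof (Rmin_r (Cmod u / 2) (eps * (Cmod u * Cmod u * Cmod u) / 2)) as Hd2.
  fold d in Hd1, Hd2. set (r := Cmod (y - u)%C) in *.
  assert (Hyu : Cmod u / 2 < Cmod y).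
  { pose proof (Cmod_triangle (y - u)%C (- y)%C) as T.
    replace ((y - u) + - y)%C with (- u)%C in T by ring.
    rewrite !Cmod_opp in T. fold r in T. lra. }
  assert (Hy0 : y <> 0) by (intro E; rewrite E, Cmod_0 in Hyu; lra).
  change (Cmod ((/ y - / u) - (y - u) * (- / (u * u)))%C <= eps * r).
  (* The remainder of the linearisation is (y - u)^2 / (y u^2). *)
  replace ((/ y - / u) - (y - u) * (- / (u * u)))%C
    with ((y - u) * (y - u) / (y * u * u))%C by (field; auto).
  rewrite Cmod_div by (repeat apply Cmult_neq_0; auto). rewrite !Cmod_mult. fold r.
  assert (Hr : 0 <= r) by apply Cmod_ge_0.
  apply Rle_div_l; [repeat apply Rmult_lt_0_compat; lra|].
  assert (r <= eps * (Cmod y * Cmod u * Cmod u)).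
  { assert (eps * (Cmod u / 2) * Cmod u * Cmod u <= eps * Cmod y * Cmod u * Cmod u)
      by (repeat apply Rmult_le_compat_r; try lra; apply Rmult_le_compat_l; lra).
    lra. }
  replace (eps * r * (Cmod y * Cmod u * Cmod u))
    with (r * (eps * (Cmod y * Cmod u * Cmod u))) by ring.
  now apply Rmult_le_compat_l.
Qed.

Lemma Int_part_unique (k : Z) (t : R) : IZR k <= t < IZR k + 1 -> Int_part t = k.
Proof.
  intros [H1 H2]. destruct (base_Int_part t) as [A B].
  assert (Hup : IZR (Int_part t) < IZR (k + 1)) by (rewrite plus_IZR; lra).
  assert (Hlow : IZR k < IZR (Int_part t + 1)) by (rewrite plus_IZR; lra).
  apply lt_IZR in Hup. apply lt_IZR in Hlow. lia.
Qed.

Lemma nint_unique (r : R) (m : Z) : Rabs (r - IZR m) < /2 -> nint r = m.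
Proof.
  intro H. apply Rabs_def2 in H. destruct H as [H1 H2].
  unfold nint. destruct (Rlt_dec 0 r).
  - rewrite (Int_part_unique (- m)); [lia|]. rewrite opp_IZR. lra.
  - apply Int_part_unique. lra.
Qed.

Definition branch (c : Z) (u : C) : C := (- / u - RtoC (IZR c))%C.

Definition in_branch (c : Z) (u : C) : Prop := u <> 0 /\ Cmod (branch c u) < /2.

Lemma G_branch (c : Z) (u : C) : Cmod (branch c u) < /2 -> G u = branch c u.
Proof.
  intro H. unfold G. rewrite (nint_unique _ c); [reflexivity|].
  eapply Rle_lt_trans; [|exact H].
  replace (Re (- / u)%C - IZR c) with (Re (branch c u)); [apply re_le_Cmod|].
  unfold branch, Cminus. rewrite re_plus, !re_opp, re_RtoC. ring.
Qed.

Lemma is_derive_branch (c : Z) (u : C) : u <> 0 -> is_derive_CC (branch c) u (/ (u * u))%C.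
Proof.
  intro Hu.
  pose proof (is_derive_plus _ _ u _ _ (is_derive_opp _ u _ (is_derive_Cinv u Hu))
    (is_derive_const (V := AbsRing_NormedModule C_AbsRing) (Copp (RtoC (IZR c))) u)) as D.
  replace (/ (u * u))%C with (plus (opp (- / (u * u))%C) (@zero (AbsRing_NormedModule C_AbsRing)))
    by (change (- - / (u * u) + 0 = / (u * u))%C; ring).
  exact D.
Qed.

Lemma is_derive_G (c : Z) (u : C) : in_branch c u -> is_derive_CC G u (/ (u * u))%C.
Proof.
  intros [Hu Hc]. pose proof (is_derive_branch c u Hu) as D.
  apply (is_derive_ext_loc (V := AbsRing_NormedModule C_AbsRing) (branch c)); [|exact D].
  (* [Cmod (branch c .) < 1/2] is an open condition holding at u. *)
  assert (Hl : @locally (AbsRing_UniformSpace C_AbsRing) (branch c u) (fun v : C => Cmod v < /2)).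
  { apply (locally_le_locally_norm (V := AbsRing_NormedModule C_AbsRing)).
    assert (Hp : 0 < /2 - Cmod (branch c u)) by lra.
    exists (mkposreal _ Hp). intros v Hv. change C in v.
    change (Cmod (v - branch c u)%C < / 2 - Cmod (branch c u)) in Hv.
    pose proof (Cmod_triangle (v - branch c u)%C (branch c u)) as T.
    replace (v - branch c u + branch c u)%C with v in T by ring. lra. }
  pose proof (ex_derive_continuous (V := AbsRing_NormedModule C_AbsRing) (branch c) u
    (ex_intro _ _ D) _ Hl) as Hnear.
  eapply filter_imp; [|exact Hnear]. intros y Hy. symmetry. now apply G_branch.
Qed.

Definition affine (p : C * C) (t : C) : C := (fst p * t + snd p)%C.

(* Coefficients (numerator, denominator) of the Möbius map
   t |-> -1/(c_0 - 1/(c_1 - ... - 1/(c_{m-1} + t))), which inverts the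
   branches [branch c_{m-1} o ... o branch c_0]. *)
Fixpoint cf_forms (c : nat -> Z) (m : nat) : (C * C) * (C * C) :=
  match m with
  | O => ((RtoC 1, RtoC 0), (RtoC 0, RtoC 1))
  | S m' => let p := cf_forms (fun j => c (S j)) m' in
     ((Copp (fst (snd p)), Copp (snd (snd p))),
      (fst (fst p) + RtoC (IZR (c O)) * fst (snd p),
       snd (fst p) + RtoC (IZR (c O)) * snd (snd p))%C)
  end.

Definition cf_num (c : nat -> Z) (m : nat) : C -> C := affine (fst (cf_forms c m)).
Definition cf_den (c : nat -> Z) (m : nat) : C -> C := affine (snd (cf_forms c m)).

Lemma cf_num_S (c : nat -> Z) (m : nat) (t : C) :
  cf_num c (S m) t = Copp (cf_den (fun j => c (S j)) m t).
Proof. unfold cf_num, cf_den, affine; simpl. ring. Qed.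

Lemma cf_den_S (c : nat -> Z) (m : nat) (t : C) : cf_den c (S m) t =
  (cf_num (fun j => c (S j)) m t + RtoC (IZR (c O)) * cf_den (fun j => c (S j)) m t)%C.
Proof. unfold cf_num, cf_den, affine; simpl. ring. Qed.

Lemma Cmod_cf_num_lt_den (m : nat) : forall (c : nat -> Z) (t : C),
  (forall k, (k < m)%nat -> 2 <= Rabs (IZR (c k))) ->
  Cmod t < 1 -> Cmod (cf_num c m t) < Cmod (cf_den c m t).
Proof.
  induction m as [|m IH]; intros c t Hc Ht.
  - unfold cf_num, cf_den, affine; simpl.
    replace (1 * t + 0)%C with t by ring. replace (0 * t + 1)%C with (RtoC 1) by ring.
    now rewrite Cmod_1.
  - rewrite cf_num_S, cf_den_S, Cmod_opp.
    assert (IH' := IH (fun j => c (S j)) t ltac:(intros; apply Hc; lia) Ht).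
    set (N := cf_num (fun j => c (S j)) m t) in *.
    set (D := cf_den (fun j => c (S j)) m t) in *.
    pose proof (Cmod_triangle (N + RtoC (IZR (c O)) * D)%C (- N)%C) as T.
    replace (N + RtoC (IZR (c O)) * D + - N)%C with (RtoC (IZR (c O)) * D)%C in T by ring.
    rewrite Cmod_opp, Cmod_mult, Cmod_R in T.
    assert (Hc0 : 2 <= Rabs (IZR (c O))) by (apply Hc; lia).
    pose proof (Cmod_ge_0 N).
    assert (2 * Cmod D <= Rabs (IZR (c O)) * Cmod D)
      by (apply Rmult_le_compat_r; [apply Cmod_ge_0 | lra]).
    lra.
Qed.

Lemma Giter_S (m : nat) (z : C) : Giter (S m) z = Giter m (G z).
Proof. apply Nat.iter_succ_r. Qed.

Lemma cf_forms_invert_Giter (m : nat) : forall (c : nat -> Z) (z : C),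
  (forall k, (k < m)%nat -> in_branch (c k) (Giter k z)) ->
  (z * cf_den c m (Giter m z) = cf_num c m (Giter m z))%C.
Proof.
  induction m as [|m IH]; intros c z Hb.
  - unfold cf_num, cf_den, affine; simpl. ring.
  - rewrite Giter_S, cf_num_S, cf_den_S.
    assert (Hb' : forall k, (k < m)%nat -> in_branch (c (S k)) (Giter k (G z))).
    { intros k Hk. rewrite <- Giter_S. apply Hb. lia. }
    rewrite <- (IH _ _ Hb').
    destruct (Hb O ltac:(lia)) as [Hz0 Hz]. simpl in Hz.
    rewrite (G_branch _ _ Hz). unfold branch. field. exact Hz0.
Qed.

Lemma is_derive_Cid (z : C) : is_derive (fun t : C => t) z (RtoC 1).
Proof.
  split; [apply is_linear_scal_l|]. intros x _ eps. apply filter_forall. intro y.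
  change (Cmod ((y - x) - (y - x) * 1)%C <= eps * Cmod (y - x)%C).
  replace ((y - x) - (y - x) * 1)%C with (RtoC 0) by ring. rewrite Cmod_0.
  pose proof (cond_pos eps). pose proof (Cmod_ge_0 (y - x)%C). nra.
Qed.

Lemma is_derive_Giter (m : nat) : forall (c : nat -> Z) (z : C),
  (forall k, (k < m)%nat -> in_branch (c k) (Giter k z)) ->
  is_derive (Giter m) z (cf_den c m (Giter m z) * cf_den c m (Giter m z))%C.
Proof.
  induction m as [|m IH]; intros c z Hb.
  - replace (cf_den c 0 (Giter 0 z) * cf_den c 0 (Giter 0 z))%C with (RtoC 1)
      by (unfold cf_den, affine; simpl; ring).
    apply is_derive_Cid.
  - pose proof (cf_forms_invert_Giter (S m) c z Hb) as Hinv.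
    rewrite Giter_S, cf_num_S in Hinv. rewrite Giter_S, cf_den_S in *.
    assert (Hb' : forall k, (k < m)%nat -> in_branch (c (S k)) (Giter k (G z))).
    { intros k Hk. rewrite <- Giter_S. apply Hb. lia. }
    assert (Hz := Hb O ltac:(lia)). change (in_branch (c O) z) in Hz.
    pose proof (is_derive_comp _ G z _ _ (IH _ _ Hb') (is_derive_G _ _ Hz)) as DC.
    apply (is_derive_ext (fun t => Giter m (G t))); [intro t; symmetry; apply Giter_S|].
    set (N := cf_num (fun j => c (S j)) m (Giter m (G z))) in *.
    set (D := cf_den (fun j => c (S j)) m (Giter m (G z))) in *.
    (* The inversion formula reads D = -z (N + c_0 D), so D^2 / z^2 = (N + c_0 D)^2. *)
    replace ((N + RtoC (IZR (c O)) * D) * (N + RtoC (IZR (c O)) * D))%C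
      with (scal (/ (z * z))%C (D * D)%C); [exact DC|].
    change (/ (z * z) * (D * D) = (N + RtoC (IZR (c O)) * D) * (N + RtoC (IZR (c O)) * D))%C.
    replace D with (- (z * (N + RtoC (IZR (c O)) * D)))%C at 1 2 by (rewrite Hinv; ring).
    field. apply Hz.
Qed.

Lemma Cmod_coef_le_of_nonvanishing (A B : C) :
  (forall t, Cmod t < 1 -> (A * t + B)%C <> 0) -> Cmod A <= Cmod B.
Proof.
  intro H. destruct (Rle_lt_dec (Cmod A) (Cmod B)) as [|Hlt]; [assumption|]. exfalso.
  assert (HA : A <> 0) by (intro E; rewrite E, Cmod_0 in Hlt; pose proof (Cmod_ge_0 B); lra).
  apply (H (- B / A)%C); [|field; exact HA].
  rewrite Cmod_div, Cmod_opp by exact HA. apply Cmod_gt_0 in HA.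
  apply Rmult_lt_reg_r with (Cmod A); [exact HA|].
  unfold Rdiv. rewrite Rmult_assoc, Rinv_l by lra. lra.
Qed.

Lemma Cmod_affine_bounds (A B t : C) : Cmod A <= Cmod B -> Cmod t < /2 ->
  Cmod B / 2 <= Cmod (A * t + B)%C <= 3 * Cmod B / 2.
Proof.
  intros HAB Ht. pose proof (Cmod_ge_0 t).
  assert (Cmod A * Cmod t <= Cmod B / 2)
    by (apply Rle_trans with (Cmod B * / 2); [apply Rmult_le_compat; try apply Cmod_ge_0|]; lra).
  split.
  - pose proof (Cmod_triangle (A * t + B)%C (- (A * t))%C) as T.
    replace (A * t + B + - (A * t))%C with B in T by ring.
    rewrite Cmod_opp, Cmod_mult in T. lra.
  - pose proof (Cmod_triangle (A * t)%C B) as T. rewrite Cmod_mult in T. lra.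
Qed.

Lemma Cmod_affine_sq_ratio_bounds (A B u v : C) :
  (forall t, Cmod t < 1 -> (A * t + B)%C <> 0) -> Cmod u < /2 -> Cmod v < /2 ->
  / 9 <= Cmod (((A * u + B) * (A * u + B)) / ((A * v + B) * (A * v + B)))%C <= 9.
Proof.
  intros H Hu Hv.
  assert (HAB := Cmod_coef_le_of_nonvanishing A B H).
  assert (HB : 0 < Cmod B).
  { apply Cmod_gt_0. intro E. apply (H (RtoC 0)); [rewrite Cmod_0; lra|]. rewrite E. ring. }
  destruct (Cmod_affine_bounds A B u HAB Hu) as [a1 a2].
  destruct (Cmod_affine_bounds A B v HAB Hv) as [d1 d2].
  assert (Hd0 : (A * v + B)%C <> 0) by (intro E; rewrite E, Cmod_0 in d1; lra).
  rewrite Cmod_div by (apply Cmult_neq_0; exact Hd0). rewrite !Cmod_mult.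
  set (a := Cmod (A * u + B)%C) in *. set (d := Cmod (A * v + B)%C) in *.
  assert (Hd : 0 < d * d) by (apply Rmult_lt_0_compat; lra).
  split; [apply Rle_div_r | apply Rle_div_l]; auto; nra.
Qed.

Lemma cfrac_abs_le1 (b e : nat -> Z) (m : nat) : forall k,
  (forall j, (k <= j < k + m)%nat -> (2 <= b j)%Z) ->
  (forall j, (k <= j < k + m)%nat -> e j = 1%Z \/ e j = (-1)%Z) ->
  Rabs (cfrac b e k m) <= 1.
Proof.
  induction m as [|m IH]; intros k Hb He; simpl.
  - rewrite Rabs_R0; lra.
  - assert (H1 : Rabs (cfrac b e (S k) m) <= 1) by (apply IH; intros; [apply Hb | apply He]; lia).
    assert (H2 : 2 <= IZR (b k)) by (apply IZR_le, Hb; lia).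
    assert (He1 : Rabs (IZR (e k)) = 1)
      by (destruct (He k ltac:(lia)) as [E|E]; rewrite E; unfold Rabs; destruct Rcase_abs; lra).
    apply Rabs_le_between in H1.
    unfold Rdiv. rewrite Rabs_mult, Rabs_inv, He1, Rabs_pos_eq, Rmult_1_l by lra.
    rewrite <- Rinv_1. apply Rinv_le_contravar; lra.
Qed.

Lemma cfrac_neq0 (b e : nat -> Z) (n : nat) : (1 <= n)%nat ->
  (forall j, (1 <= j <= n)%nat -> (2 <= b j)%Z) ->
  (forall j, (1 <= j <= n)%nat -> e j = 1%Z \/ e j = (-1)%Z) ->
  cfrac b e 1 n <> 0.
Proof.
  intros Hn Hb He. destruct n as [|n]; [lia|]. simpl.
  assert (H1 : Rabs (cfrac b e 2 n) <= 1)
    by (apply cfrac_abs_le1; intros; [apply Hb | apply He]; lia).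
  assert (H2 : 2 <= IZR (b 1%nat)) by (apply IZR_le, Hb; lia).
  apply Rabs_le_between in H1.
  assert (IZR (e 1%nat) <> 0) by (destruct (He 1%nat ltac:(lia)) as [E|E]; rewrite E; lra).
  unfold Rdiv. apply Rmult_integral_contrapositive_currified; [assumption|].
  apply Rinv_neq_0_compat. lra.
Qed.

Definition zsign (t : R) : Z :=
  if Rlt_dec 0 t then 1%Z else if Rlt_dec t 0 then (-1)%Z else 0%Z.

Lemma rsign_zsign (t : R) : rsign t = IZR (zsign t).
Proof.
  unfold rsign, zsign. destruct (Rlt_dec 0 t); [reflexivity|]. now destruct (Rlt_dec t 0).
Qed.

Lemma zsign_neq0 (t : R) : t <> 0 -> zsign t <> 0%Z.
Proof.
  intro H. unfold zsign. destruct (Rlt_dec 0 t); [lia|]. destruct (Rlt_dec t 0); [lia | lra].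
Qed.

Lemma abs_zsign_mul_ge2 (t : R) (bb : Z) : zsign t <> 0%Z -> (2 <= bb)%Z ->
  2 <= Rabs (IZR (- (zsign t * bb))).
Proof.
  intros Hs Hbb. rewrite <- abs_IZR. apply IZR_le.
  unfold zsign in *. destruct (Rlt_dec 0 t); [lia|]. destruct (Rlt_dec t 0); lia.
Qed.

Lemma inD_in_branch (s bb : Z) (u : C) : inD (IZR s) bb u -> u <> 0 ->
  in_branch (- (s * bb)) u.
Proof.
  intros [w [Hw Eu]] Hu. split; [exact Hu|].
  assert (Hw0 : w <> 0) by (intro E; apply Hu; rewrite Eu, E, Cinv_0; ring).
  unfold branch. replace (- / u)%C with w by (rewrite Eu; field; exact Hw0).
  rewrite opp_IZR, mult_IZR, RtoC_opp.
  replace (w - - RtoC (IZR s * IZR bb))%C with (w + RtoC (IZR s * IZR bb))%C by ring.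
  exact Hw.
Qed.

Lemma in_branch_Cmod_G (c : Z) (u : C) : in_branch c u -> Cmod (G u) < /2.
Proof. intros [_ H]. now rewrite (G_branch _ _ H). Qed.

Lemma inD_0_Cmod_gt2 (bb : Z) (u : C) : inD 0 bb u -> u <> 0 -> 2 < Cmod u.
Proof.
  intros [w [Hw Eu]] Hu.
  assert (Hw0 : w <> 0) by (intro E; apply Hu; rewrite Eu, E, Cinv_0; ring).
  replace (w + RtoC (0 * IZR bb))%C with w in Hw by (rewrite Rmult_0_l; ring).
  rewrite Eu, Cmod_opp, Cmod_inv by exact Hw0.
  apply Cmod_gt_0 in Hw0.
  replace 2 with (/ / 2) by field. apply Rinv_lt_contravar; [apply Rmult_lt_0_compat|]; lra.
Qed.

(* On D(s/b), G is the branch u |-> -1/u + s b. *)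
Definition cf_digit (b : nat -> Z) (x : R) (k : nat) : Z :=
  (- (zsign (Re (Giter k (RtoC x))) * b (S k)))%Z.

Section Cylinder.

Variables (n : nat) (b e : nat -> Z).
Hypothesis n_ge1 : (1 <= n)%nat.
Hypothesis b_ge2 : forall j : nat, (1 <= j <= n)%nat -> (2 <= b j)%Z.
Hypothesis e_sign : forall j : nat, (1 <= j <= n)%nat -> e j = 1%Z \/ e j = (-1)%Z.

Let x := cfrac b e 1 n.

Lemma inF_in_branch (y : C) : inF n b x y ->
  forall k, (k < n)%nat -> in_branch (cf_digit b x k) (Giter k y).
Proof.
  intros [Hy0 HyD] k Hk. apply inD_in_branch; [|exact (Hy0 k Hk)].
  rewrite <- rsign_zsign. specialize (HyD k Hk).
  unfold sgnk in HyD. rewrite Nat.sub_succ, Nat.sub_0_r in HyD. exact HyD.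
Qed.

Lemma inF_Cmod_Giter_S (y : C) : inF n b x y ->
  forall k, (k < n)%nat -> Cmod (Giter (S k) y) < /2.
Proof. intros Fy k Hk. exact (in_branch_Cmod_G _ _ (inF_in_branch y Fy k Hk)). Qed.

Lemma inF_Cmod_Giter (y : C) : inF n b x y -> Cmod (Giter n y) < /2.
Proof.
  intro Fy. pose proof (inF_Cmod_Giter_S y Fy (n - 1) ltac:(lia)) as H.
  now replace (S (n - 1)) with n in H by lia.
Qed.

(* s_1 <> 0 as x <> 0; s_{k+1} = 0 would put G^k(y) outside the disc B(0, 1/2)
   to which G maps. *)
Lemma inF_zsign_neq0 (y : C) : inF n b x y ->
  forall k, (k < n)%nat -> zsign (Re (Giter k (RtoC x))) <> 0%Z.
Proof.
  intros Fy k Hk. destruct k as [|k].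
  - apply zsign_neq0. exact (cfrac_neq0 b e n n_ge1 b_ge2 e_sign).
  - intro E. pose proof (inF_Cmod_Giter_S y Fy k ltac:(lia)) as Hsmall.
    destruct Fy as [Hy0 HyD]. pose proof (HyD (S k) Hk) as HD.
    unfold sgnk in HD. rewrite Nat.sub_succ, Nat.sub_0_r, rsign_zsign, E in HD.
    pose proof (inD_0_Cmod_gt2 _ _ HD (Hy0 (S k) Hk)). lra.
Qed.

Lemma inF_cf_digit_abs_ge2 (y : C) : inF n b x y ->
  forall k, (k < n)%nat -> 2 <= Rabs (IZR (cf_digit b x k)).
Proof.
  intros Fy k Hk. apply abs_zsign_mul_ge2; [exact (inF_zsign_neq0 y Fy k Hk)|].
  apply b_ge2. lia.
Qed.

Lemma inF_derive_Giter (y dy : C) : inF n b x y -> is_derive (Giter n) y dy ->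
  dy = (cf_den (cf_digit b x) n (Giter n y) * cf_den (cf_digit b x) n (Giter n y))%C.
Proof.
  intros Fy Dy. rewrite <- (is_C_derive_unique _ _ _ Dy).
  apply is_C_derive_unique, is_derive_Giter. exact (inF_in_branch y Fy).
Qed.

Lemma inF_cf_den_neq0 (y : C) : inF n b x y ->
  forall t, Cmod t < 1 -> cf_den (cf_digit b x) n t <> 0.
Proof.
  intros Fy t Ht E.
  pose proof (Cmod_cf_num_lt_den n _ t (inF_cf_digit_abs_ge2 y Fy) Ht) as Hlt.
  rewrite E, Cmod_0 in Hlt. pose proof (Cmod_ge_0 (cf_num (cf_digit b x) n t)). lra.
Qed.

End Cylinder.

Theorem lemma6p6 :
  exists C1 : R, 0 < C1 /\
  forall (n : nat) (b e : nat -> Z),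
    (1 <= n)%nat ->
    (forall j : nat, (1 <= j <= n)%nat -> (2 <= b j)%Z) ->
    (forall j : nat, (1 <= j <= n)%nat -> e j = 1%Z \/ e j = (-1)%Z) ->
    forall (z w dz dw : C),
      inF n b (cfrac b e 1 n) z ->
      inF n b (cfrac b e 1 n) w ->
      is_derive (Giter n) z dz ->
      is_derive (Giter n) w dw ->
      / C1 <= Cmod (Cdiv dz dw) <= C1.
Proof.
  exists 9. split; [lra|].
  intros n b e Hn Hb He z w dz dw Fz Fw Dz Dw.
  rewrite (inF_derive_Giter n b e z dz Fz Dz), (inF_derive_Giter n b e w dw Fw Dw).
  apply Cmod_affine_sq_ratio_bounds.
  - exact (inF_cf_den_neq0 n b e Hn Hb He z Fz).
  - exact (inF_Cmod_Giter n b e Hn z Fz).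
  - exact (inF_Cmod_Giter n b e Hn w Fw).
Qed.
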